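(* Let $\lambda\in\mathbb R$ and $\eta\ge0$. Let $(P_n)_{n\ge0}$ be the monic polynomials with $P_{-1}=0$, $P_0=1$, $xP_0=P_1$, $xP_1=P_2+\lambda P_1+P_0$ and $xP_n=P_{n+1}+\lambda P_n+(1+\eta)P_{n-1}$ for $n\ge2$, let $\mu_{\lambda,\eta}$ be their compactly supported orthogonality measure, and let $\partial^\dagger_{\lambda,\eta}$ be the bounded operator on $L^2(\mathbb R,\mu_{\lambda,\eta})$ determined by $\partial^\dagger_{\lambda,\eta}P_n=P_{n+1}$, $n\ge0$. Let $\Psi_{\lambda,\eta+1}(w)=\dfrac{w}{1+\lambda w+(\eta+1)w^2}$ and let $\Psi^{-1}_{\lambda,\eta+1}$ be its compositional inverse near $0$ (with $\Psi^{-1}_{\lambda,\eta+1}(0)=0$). Then there exists $\varepsilon>0$ such that for all real $z$ with $|z|<\varepsilon$, in $L^2(\mu_{\lambda,\eta})$, $$\partial^\dagger_{\lambda,\eta}(1-xz)^{-1}=\left(\frac{x-\Psi^{-1}_{\lambda,\eta+1}(z)}{1+\lambda\Psi^{-1}_{\lambda,\eta+1}(z)+\eta\bigl(\Psi^{-1}_{\lambda,\eta+1}(z)\bigr)^2}\right)(1-xz)^{-1},$$ and, for $0<|z|<\varepsilon$, with $R(z)=\sqrt{(1-\lambda z)^2-4z^2(\eta+1)}$ (principal branch, $R(0)=1$), this equals $$\left(x\,\frac{4z^2(\eta+1)^2}{\bigl(2\eta+1+\lambda z+R(z)\bigr)\bigl(1-\lambda z-R(z)\bigr)}-\frac{2z(\eta+1)}{2\eta+1+\lambda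 z+R(z)}\right)(1-xz)^{-1}.$$
   Context: For $|z|$ small, $x\mapsto(1-xz)^{-1}$ is a bounded continuous function on the support of $\mu_{\lambda,\eta}$, hence an element of $L^2(\mu_{\lambda,\eta})$; $x$ denotes multiplication by the variable. *)

From HB Require Import structures.
From mathcomp Require Import all_boot all_order all_algebra.
From mathcomp Require Import all_classical all_reals all_analysis.
Set Implicit Arguments. Unset Strict Implicit. Unset Printing Implicit Defensive.
Import Order.TTheory GRing.Theory Num.Theory.
Import numFieldNormedType.Exports.
Local Open Scope classical_set_scope.
Local Open Scope ring_scope.

(* The monic polynomials P_n of the statement, computed as consecutive pairs
   (P_n, P_{n+1}):
     P_0 = 1, P_1 = X,  P_2 = (X - lam) P_1 - P_0,
     P_{n+1} = (X - lam) P_n - (1 + eta) P_{n-1}  for n >= 2. *)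
Fixpoint Ppair (R : ringType) (lam eta : R) (n : nat) : {poly R} * {poly R} :=
  match n with
  | 0 => (1, 'X)
  | n'.+1 =>
      let: (p, q) := Ppair lam eta n' in
      (q, ('X - lam%:P) * q - ((if n' is 0 then 1 else 1 + eta) *: p))
  end.

Definition Ppoly (R : ringType) (lam eta : R) (n : nat) : {poly R} :=
  (Ppair lam eta n).1.

Definition sq_int (R : realType) (mu : {measure set R -> \bar R}) (f : R -> R) :=
  measurable_fun setT f /\ mu.-integrable setT (fun x => (f x ^+ 2)%:E).

(* mu is (a positive multiple of) the compactly supported orthogonality
   measure of the family Ppoly lam eta: a finite measure carried by a
   compact interval for which the P_n are orthogonal with nonzero norms.
   (For this bounded Jacobi recurrence such a measure is unique up to a
   positive scalar.) *)
Definition orth_measure (R : realType) (lam eta : R)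
    (mu : {measure set R -> \bar R}) :=
  [/\ (mu setT < +oo)%E,
      (exists M : R, mu [set x | M < `|x|] = 0%E),
      (forall m n : nat, m <> n ->
         (\int[mu]_x ((Ppoly lam eta m).[x] * (Ppoly lam eta n).[x])%:E = 0)%E) &
      (forall n : nat,
         (0 < \int[mu]_x (((Ppoly lam eta n).[x]) ^+ 2)%:E)%E)].

(* D represents a bounded linear operator on L^2(mu) (acting on
   representatives; identities hold mu-a.e.) with D P_n = P_{n+1}. *)
Definition creation_op (R : realType) (lam eta : R)
    (mu : {measure set R -> \bar R}) (D : (R -> R) -> (R -> R)) :=
  [/\ (forall f g, sq_int mu f -> sq_int mu g ->
         {ae mu, forall x, D (f \+ g) x = D f x + D g x}),
      (forall (a : R) f, sq_int mu f ->
         {ae mu, forall x, D (fun y => a * f y) x = a * D f x}),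
      (exists C : R, forall f, sq_int mu f ->
         sq_int mu (D f) /\
         (\int[mu]_x ((D f x) ^+ 2)%:E <= C%:E * \int[mu]_x ((f x) ^+ 2)%:E)%E) &
      (forall n : nat,
         {ae mu, forall x, D (fun y => (Ppoly lam eta n).[y]) x
                           = (Ppoly lam eta n.+1).[x]})].

Definition Psi (R : realType) (lam eta : R) (w : R) : R :=
  w / (1 + lam * w + (eta + 1) * w ^+ 2).

Definition local_inverse_Psi (R : realType) (lam eta : R) (Winv : R -> R) :=
  [/\ Winv 0 = 0, {for 0, continuous Winv} &
      exists d : R, 0 < d /\ forall z : R, `|z| < d ->
         Psi lam eta (Winv z) = z].

(* With Q = 1 + lam w + (eta+1) w^2 and u = 1 + lam w + eta w^2, the three-term
   recurrence gives the generating function sum_n w^n P_n(x) = u / (Q - x w).  Hence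
   for z = Psi(w) = w / Q we get (1 - x z)^-1 = (Q/u) sum_n w^n P_n(x), and shifting
   the index, (Q/u) sum_n w^n P_{n+1}(x) = (x - w)/u (1 - x z)^-1.  For small w both
   series converge uniformly on the compact support of mu, hence in L^2(mu); since D
   is bounded and maps the partial sums of the first series to those of the second,
   D (1 - x z)^-1 equals the second sum mu-a.e.  With w = Psi^-1(z), the closed form
   comes from solving z (1 + lam w + (eta+1) w^2) = w, whose discriminant
   (1 - lam z)^2 - 4 z^2 (eta+1) is the square of 1 - lam z - 2 (eta+1) z w. *)

From HB Require Import structures.
From mathcomp Require Import all_boot all_order all_algebra.
From mathcomp Require Import all_classical all_reals all_analysis.
From mathcomp Require Import ring lra measurable_realfun.
Set Implicit Arguments.
Unset Strict Implicit.
Unset Printing Implicit Defensive.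
Import Order.TTheory GRing.Theory Num.Theory.
Import numFieldNormedType.Exports.
Local Open Scope classical_set_scope.
Local Open Scope ring_scope.

Definition Pcoef (R : nzRingType) (eta : R) (n : nat) : R :=
  if n is 0 then 1 else 1 + eta.

Definition Psi_den (R : nzRingType) (lam eta w : R) : R :=
  1 + lam * w + (eta + 1) * w ^+ 2.

Definition gf_num (R : nzRingType) (lam eta w : R) : R :=
  1 + lam * w + eta * w ^+ 2.

Lemma Ppair_Ppoly (R : nzRingType) (lam eta : R) n :
  Ppair lam eta n = (Ppoly lam eta n, Ppoly lam eta n.+1).
Proof. by rewrite /Ppoly /=; case: (Ppair lam eta n). Qed.

Section PpolyRecurrence.
Variables (R : comNzRingType) (lam eta : R).

Lemma horner_Ppoly0 x : (Ppoly lam eta 0).[x] = 1.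
Proof. by rewrite /Ppoly /= hornerC. Qed.

Lemma horner_Ppoly1 x : (Ppoly lam eta 1).[x] = x.
Proof. by rewrite /Ppoly /= hornerX. Qed.

Lemma horner_PpolySS n x :
  (Ppoly lam eta n.+2).[x] =
  (x - lam) * (Ppoly lam eta n.+1).[x] - Pcoef eta n * (Ppoly lam eta n).[x].
Proof. by rewrite {1}/Ppoly /= Ppair_Ppoly !hornerE. Qed.

Definition gf_rem n w x : R :=
  (Ppoly lam eta n.+1).[x] * w ^+ n.+1
  - Pcoef eta n * (Ppoly lam eta n).[x] * w ^+ n.+2.

Lemma gf_partial_sum n w x :
  (Psi_den lam eta w - x * w) * \sum_(i < n.+1) w ^+ i * (Ppoly lam eta i).[x]
  = gf_num lam eta w - gf_rem n w x.
Proof.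
rewrite /gf_rem /Psi_den /gf_num; elim: n => [|n IH].
  by rewrite big_ord_recr big_ord0 /= horner_Ppoly0 horner_Ppoly1 /Pcoef; ring.
by rewrite big_ord_recr /= mulrDr IH horner_PpolySS !exprS; ring.
Qed.

End PpolyRecurrence.

Section PartialSumErrors.
Variables (F : fieldType) (lam eta w x : F).
Local Notation Q := (Psi_den lam eta w).
Local Notation u := (gf_num lam eta w).
Local Notation V := (Psi_den lam eta w - x * w).
Hypotheses (u_neq0 : u != 0) (V_neq0 : V != 0).

Lemma resolvent_Psi_den : Q != 0 -> (1 - x * (w / Q))^-1 = Q / V.
Proof.
move=> Q0; have -> : 1 - x * (w / Q) = V / Q by field.
by rewrite invf_div.
Qed.

Lemma resolvent_partial_sum_err n :
  Q / V - \sum_(i < n.+1) (Q / u * w ^+ i) * (Ppoly lam eta i).[x]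
  = Q / (u * V) * gf_rem lam eta n w x.
Proof.
have -> : \sum_(i < n.+1) (Q / u * w ^+ i) * (Ppoly lam eta i).[x]
        = Q / u * ((u - gf_rem lam eta n w x) / V).
  rewrite -gf_partial_sum [X in _ = _ * X]mulrC mulKf // mulr_sumr.
  by apply: eq_bigr => i _; rewrite mulrA.
by field; apply/andP.
Qed.

Lemma shifted_partial_sum_err n : w != 0 ->
  (x - w) / u * (Q / V)
    - \sum_(i < n.+1) (Q / u * w ^+ i) * (Ppoly lam eta i.+1).[x]
  = Q / (u * V * w) * gf_rem lam eta n.+1 w x.
Proof.
move=> w0.
have hS := gf_partial_sum lam eta n.+1 w x.
rewrite big_ord_recl /= expr0 mul1r horner_Ppoly0 in hS.
have -> : \sum_(i < n.+1) (Q / u * w ^+ i) * (Ppoly lam eta i.+1).[x]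
        = Q / u * (((u - gf_rem lam eta n.+1 w x) / V - 1) / w).
  rewrite -hS [X in X - 1]mulrC mulKf // addrAC subrr add0r mulr_suml mulr_sumr.
  by apply: eq_bigr => i _; rewrite /bump /= add1n exprS; field; rewrite w0.
move: u_neq0 V_neq0; rewrite /gf_num /Psi_den => u0 V0.
by field; rewrite u0 V0 w0.
Qed.

End PartialSumErrors.

Section GrowthBounds.
Variables (R : realFieldType) (lam eta m A : R).

Lemma norm_Pcoef_le n : 0 <= eta -> `|Pcoef eta n| <= 1 + eta.
Proof.
by move=> ?; case: n => [|n]; rewrite /Pcoef ger0_norm ?lerDl //; apply: addr_ge0.
Qed.

Lemma norm_Ppoly_le n x : 0 <= eta -> m + `|lam| + eta + 1 <= A -> `|x| <= m ->
  `|(Ppoly lam eta n).[x]| <= A ^+ n.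
Proof.
move=> eta_ge0 hA hx; have m0 : 0 <= m := le_trans (normr_ge0 x) hx.
have lam0 : 0 <= `|lam| := normr_ge0 lam; have A0 : 0 <= A by lra.
suff /(_ n)[] : forall n, `|(Ppoly lam eta n).[x]| <= A ^+ n
                       /\ `|(Ppoly lam eta n.+1).[x]| <= A ^+ n.+1 by [].
elim=> [|k [IHk IHk1]].
  by rewrite horner_Ppoly0 horner_Ppoly1 normr1 expr0 expr1; split; lra.
split=> //; rewrite horner_PpolySS.
have hxl : `|x - lam| <= m + `|lam| by apply: le_trans (ler_normB _ _) _; lra.
have Ak : A ^+ k <= A ^+ k.+1 by rewrite exprS ler_peMl ?exprn_ge0 //; lra.
have h1 : `|x - lam| * `|(Ppoly lam eta k.+1).[x]| <= (m + `|lam|) * A ^+ k.+1.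
  exact: ler_pM.
have h2 : `|Pcoef eta k| * `|(Ppoly lam eta k).[x]| <= (1 + eta) * A ^+ k.+1.
  by apply: ler_pM => //; [exact: norm_Pcoef_le | exact: le_trans Ak].
have hA' : (m + `|lam| + (1 + eta)) * A ^+ k.+1 <= A * A ^+ k.+1.
  by rewrite ler_wpM2r ?exprn_ge0 //; lra.
by apply: le_trans (ler_normB _ _) _; rewrite !normrM [A ^+ k.+2]exprS; lra.
Qed.

Lemma norm_gf_rem_le n w x : 0 <= eta -> m + `|lam| + eta + 1 <= A -> `|x| <= m ->
  A * `|w| <= 1/4 -> `|gf_rem lam eta n w x| <= 2 * (A * `|w|) ^+ n.+1.
Proof.
move=> eta_ge0 hA hx hw; have m0 : 0 <= m := le_trans (normr_ge0 x) hx.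
have lam0 : 0 <= `|lam| := normr_ge0 lam.
have w0 : 0 <= `|w| := normr_ge0 w; have w1 : `|w| <= 1 by nra.
have e1 : `|(Ppoly lam eta n.+1).[x] * w ^+ n.+1| <= (A * `|w|) ^+ n.+1.
  by rewrite normrM normrX exprMn ler_wpM2r ?exprn_ge0 ?norm_Ppoly_le.
have e2 : `|Pcoef eta n * (Ppoly lam eta n).[x] * w ^+ n.+2| <= (A * `|w|) ^+ n.+1.
  have cw : `|Pcoef eta n| * `|w| <= A.
    by apply: le_trans (ler_pM _ _ (norm_Pcoef_le n eta_ge0) w1) _ => //; lra.
  rewrite normrM normrX normrM (exprS _ n.+1) exprMn [A ^+ _]exprS.
  have -> : `|Pcoef eta n| * `|(Ppoly lam eta n).[x]| * (`|w| * `|w| ^+ n.+1)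
          = `|Pcoef eta n| * `|w| * `|(Ppoly lam eta n).[x]| * `|w| ^+ n.+1 by ring.
  by rewrite ler_wpM2r ?exprn_ge0 // ler_pM ?mulr_ge0 ?norm_Ppoly_le.
by apply: le_trans (ler_normB _ _) _; lra.
Qed.

Lemma norm_perturb_le (a b w : R) : 0 <= eta -> m + `|lam| + eta + 1 <= A ->
  0 <= a <= eta + 1 -> `|b| <= m ->
  A * `|w| <= 1/4 -> `|lam * w + a * w ^+ 2 - b * w| <= 1/4.
Proof.
move=> eta_ge0 hA /andP[a0 a1] hb hw; have m0 : 0 <= m := le_trans (normr_ge0 b) hb.
have lam0 : 0 <= `|lam| := normr_ge0 lam.
have w0 : 0 <= `|w| := normr_ge0 w; have w1 : `|w| <= 1 by nra.
have ha : a * `|w| ^+ 2 <= (eta + 1) * `|w| by rewrite expr2 mulrA ler_wpM2r //; nra.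
have hbw : `|b| * `|w| <= m * `|w| by rewrite ler_wpM2r.
have hAw : (m + `|lam| + eta + 1) * `|w| <= A * `|w| by rewrite ler_wpM2r.
apply: le_trans (ler_normB _ _) _; apply: le_trans (lerD (ler_normD _ _) (lexx _)) _.
by rewrite (normrM a) normrX !normrM (ger0_norm a0); lra.
Qed.

Lemma gf_den_bounds w x : 0 <= eta -> m + `|lam| + eta + 1 <= A -> `|x| <= m ->
  A * `|w| <= 1/4 ->
  [/\ 3/4 <= gf_num lam eta w, 3/4 <= Psi_den lam eta w <= 5/4
    & 3/4 <= Psi_den lam eta w - x * w].
Proof.
move=> eta_ge0 hA hx hw; have m0 : `|0 : R| <= m by rewrite normr0 (le_trans _ hx).
have a1 : 0 <= eta <= eta + 1 by apply/andP; split; lra.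
have a2 : 0 <= eta + 1 <= eta + 1 by apply/andP; split; lra.
have := norm_perturb_le eta_ge0 hA a1 m0 hw.
have := norm_perturb_le eta_ge0 hA a2 m0 hw.
have := norm_perturb_le eta_ge0 hA a2 hx hw.
rewrite /gf_num /Psi_den !mul0r !subr0 !ler_norml => /andP[? ?] /andP[? ?] /andP[? ?].
by split; [lra | apply/andP; split; lra | lra].
Qed.

End GrowthBounds.

Section ResolventExpansion.
Variables (R : realFieldType) (lam eta m A w : R).
Hypotheses (eta_ge0 : 0 <= eta) (hA : m + `|lam| + eta + 1 <= A)
  (hw : A * `|w| <= 1/4).
Local Notation Q := (Psi_den lam eta w).
Local Notation u := (gf_num lam eta w).

Lemma norm_resolvent_coef_le x : `|x| <= m -> `|Q / (u * (Q - x * w))| <= 3.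
Proof.
move=> hx; have [u34 /andP[Q34 Q54] V34] := gf_den_bounds eta_ge0 hA hx hw.
have uV : 9/16 <= u * (Q - x * w) by nra.
rewrite ger0_norm ?divr_ge0 ?ler_pdivrMr //; lra.
Qed.

Lemma norm_resolvent_le x : `|x| <= m -> `|(1 - x * (w / Q))^-1| <= 2.
Proof.
move=> hx; have [_ /andP[Q34 Q54] V34] := gf_den_bounds eta_ge0 hA hx hw.
rewrite resolvent_Psi_den ?gt_eqF //; try lra.
rewrite ger0_norm ?divr_ge0 ?ler_pdivrMr //; lra.
Qed.

Lemma resolvent_partial_sum_le n x : `|x| <= m ->
  `|(1 - x * (w / Q))^-1 - \sum_(i < n.+1) (Q / u * w ^+ i) * (Ppoly lam eta i).[x]|
  <= 6 * (A * `|w|) ^+ n.+1.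
Proof.
move=> hx; have [u34 /andP[Q34 _] V34] := gf_den_bounds eta_ge0 hA hx hw.
have [u0 Q0 V0] : [/\ u != 0, Q != 0 & Q - x * w != 0] by split; rewrite gt_eqF //; lra.
rewrite resolvent_Psi_den // resolvent_partial_sum_err //.
rewrite normrM (_ : 6 = 3 * 2); last by ring.
rewrite -mulrA; apply: ler_pM => //; first exact: norm_resolvent_coef_le hx.
exact (norm_gf_rem_le n eta_ge0 hA hx hw).
Qed.

Lemma shifted_partial_sum_le n x : `|x| <= m -> w != 0 ->
  `|(x - w) / u * (1 - x * (w / Q))^-1
    - \sum_(i < n.+1) (Q / u * w ^+ i) * (Ppoly lam eta i.+1).[x]|
  <= 6 * A * (A * `|w|) ^+ n.+1.
Proof.
move=> hx w0; have [u34 /andP[Q34 _] V34] := gf_den_bounds eta_ge0 hA hx hw.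
have [u0 Q0 V0] : [/\ u != 0, Q != 0 & Q - x * w != 0] by split; rewrite gt_eqF //; lra.
rewrite resolvent_Psi_den // shifted_partial_sum_err //.
have -> : Q / (u * (Q - x * w) * w) * gf_rem lam eta n.+1 w x
        = Q / (u * (Q - x * w)) * (gf_rem lam eta n.+1 w x / w).
  by field; rewrite u0 V0 w0.
rewrite normrM (_ : 6 * A = 3 * (2 * A)) -?mulrA; last by ring.
apply: ler_pM => //; first exact: norm_resolvent_coef_le.
rewrite normf_div ler_pdivrMr ?normr_gt0 //.
rewrite (_ : 2 * (A * (A * `|w|) ^+ n.+1) * `|w| = 2 * (A * `|w|) ^+ n.+2).
  exact (norm_gf_rem_le n.+1 eta_ge0 hA hx hw).
by rewrite [(A * `|w|) ^+ n.+2]exprS; ring.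
Qed.

End ResolventExpansion.

Section SquareIntegrals.
Context (d : measure_display) (T : measurableType d) (R : realType)
  (mu : {measure set T -> \bar R}).

Lemma measurable_sqr_EFin (f : T -> R) : measurable_fun setT f ->
  measurable_fun setT (fun x => (f x ^+ 2)%:E).
Proof. by move=> mf; apply/measurable_EFinP; exact: measurable_funX. Qed.

Lemma integral_sqr_le (f : T -> R) (B : R) : measurable_fun setT f ->
  {ae mu, forall x, `|f x| <= B} ->
  (\int[mu]_x (f x ^+ 2)%:E <= (B ^+ 2)%:E * mu setT)%E.
Proof.
move=> mf fB; rewrite -integral_cst //.
apply: ae_ge0_le_integral => //.
- by move=> x _; rewrite lee_fin sqr_ge0.
- exact: measurable_sqr_EFin.
- by move=> x _; rewrite lee_fin sqr_ge0.
apply: filterS fB => x hx _; rewrite lee_fin /=.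
have B0 : 0 <= B by apply: le_trans hx.
by move: hx; rewrite ler_norml => /andP[? ?]; nra.
Qed.

Lemma integral_sqr_addr_le (f g : T -> R) (e : R) :
  measurable_fun setT f -> measurable_fun setT g -> {ae mu, forall x, `|g x| <= e} ->
  (\int[mu]_x ((f x + g x) ^+ 2)%:E
     <= 2%:E * \int[mu]_x (f x ^+ 2)%:E + (2 * e ^+ 2)%:E * mu setT)%E.
Proof.
move=> mf mg gB.
have m2f : measurable_fun setT (fun x => 2 * f x ^+ 2).
  by apply: measurable_funM; [exact: measurable_cst | exact: measurable_funX].
have pointwise : (\int[mu]_x ((f x + g x) ^+ 2)%:E
                  <= \int[mu]_x (2 * f x ^+ 2 + 2 * e ^+ 2)%:E)%E.
  apply: ae_ge0_le_integral => //.
  - by move=> x _; rewrite lee_fin sqr_ge0.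
  - by apply: measurable_sqr_EFin; exact: measurable_funD.
  - by move=> x _; rewrite lee_fin; have := sqr_ge0 (f x); have := sqr_ge0 e; lra.
  - by apply/measurable_EFinP; apply: measurable_funD => //; exact: measurable_cst.
  apply: filterS gB => x hx _; rewrite lee_fin.
  move: hx; rewrite ler_norml => /andP[g1 g2].
  have := sqr_ge0 (f x - g x); have : 0 <= (e - g x) * (e + g x) by apply: mulr_ge0; lra.
  nra.
apply: le_trans pointwise _; under eq_integral do rewrite EFinD EFinM.
rewrite ge0_integralD //; last 3 first.
- by move=> x _; rewrite -EFinM lee_fin mulr_ge0 // sqr_ge0.
- by apply/measurable_EFinP.
- by move=> x _; rewrite lee_fin mulr_ge0 // sqr_ge0.
rewrite ge0_integralZl_EFin ?integral_cst //.
- by move=> x _; rewrite lee_fin sqr_ge0.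
- exact: measurable_sqr_EFin.
Qed.

Lemma ae_eq0_of_integral_sqr_le (h : T -> R) (K : R) : measurable_fun setT h ->
  (forall e, 0 < e -> (\int[mu]_x (h x ^+ 2)%:E <= (K * e ^+ 2)%:E)%E) ->
  {ae mu, forall x, h x = 0}.
Proof.
move=> mh hK.
have : ae_eq mu setT (fun x => (h x ^+ 2)%:E) (cst 0%E).
  apply/ae_eq_integral_abs => //; first exact: measurable_sqr_EFin.
  under eq_integral do rewrite gee0_abs ?lee_fin ?sqr_ge0 //.
  apply/eqP; rewrite eq_le integral_ge0 ?andbT; last first.
    by move=> x _; rewrite lee_fin sqr_ge0.
  apply/lee_addgt0Pr => dl dl0; rewrite add0e.
  pose e := Num.min 1 (dl / (`|K| + 1)).
  have e0 : 0 < e by rewrite lt_min ltr01 divr_gt0 // ltr_pwDr.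
  have e1 : e <= 1 by rewrite ge_min lexx.
  have eK : e * (`|K| + 1) <= dl by rewrite -ler_pdivlMr ?ltr_pwDr // ge_min lexx orbT.
  apply: le_trans (hK e e0) _; rewrite lee_fin.
  have := ler_norm K; have := normr_ge0 K; nra.
apply: filterS => x /(_ I) /= /eqP.
by rewrite eqe sqrf_eq0 => /eqP.
Qed.

End SquareIntegrals.

Lemma measurable_inv (R : realType) : measurable_fun [set: R] GRing.inv.
Proof.
rewrite -(setUCr [set 0]); apply/measurable_funU => //; first exact: measurableC.
split; first exact: measurable_fun_set1.
apply: open_continuous_measurable_fun.
  exact/closed_openC/accessible_closed_set1/hausdorff_accessible/Rhausdorff.
by move=> x; rewrite inE /= => /eqP x0; apply: inv_continuous.
Qed.

Lemma measurable_resolvent (R : realType) (z : R) :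
  measurable_fun [set: R] (fun y => (1 - y * z)^-1).
Proof.
change (measurable_fun [set: R] (GRing.inv \o (fun y => 1 - y * z))).
apply: measurableT_comp; first exact: measurable_inv.
apply: measurable_funB; first exact: measurable_cst.
exact: mulrr_measurable.
Qed.

Section CompactSupport.
Variables (R : realType) (mu : {measure set R -> \bar R}).
Hypothesis mu_fin : (mu setT < +oo)%E.

Lemma ae_norm_le_of_null (M : R) :
  mu [set x | M < `|x|] = 0%E -> {ae mu, forall x, `|x| <= M}.
Proof.
move=> null; exists [set x | M < `|x|].
split => //=; last by move=> x /negP; rewrite -ltNge.
rewrite (_ : [set x | M < `|x|] = Num.norm @^-1` `]M, +oo[); last first.
  by apply/seteqP; split => x /=; rewrite in_itv /= andbT.
by rewrite -[_ @^-1` _]setTI; exact: (normr_measurable measurableT).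
Qed.

Lemma sq_int_ae_bounded (f : R -> R) (B : R) : measurable_fun setT f ->
  {ae mu, forall x, `|f x| <= B} -> sq_int mu f.
Proof.
move=> mf fB; split => //; apply/integrableP; split; first exact: measurable_sqr_EFin.
under eq_integral do rewrite gee0_abs ?lee_fin ?sqr_ge0 //.
apply: le_lt_trans (integral_sqr_le mf fB) _.
have mu_fin_num : mu setT \is a fin_num by rewrite ge0_fin_numE.
by rewrite -(fineK mu_fin_num) -EFinM ltry.
Qed.

Lemma sq_int_scale (a : R) (f : R -> R) : sq_int mu f -> sq_int mu (fun y => a * f y).
Proof.
case=> mf f2; split; first exact: measurable_funM (measurable_cst _) mf.
under eq_fun do rewrite exprMn EFinM.
exact: integrableZl.
Qed.

Lemma sq_int_horner (M : R) (p : {poly R}) :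
  {ae mu, forall x, `|x| <= M} -> sq_int mu (fun y => p.[y]).
Proof.
move=> hM; apply: (sq_int_ae_bounded (B := \sum_(i < size p) `|p`_i| * `|M| ^+ i)).
  exact: measurable_poly.
apply: filterS hM => x hx; rewrite horner_coef.
apply: le_trans (ler_norm_sum _ _ _) _; apply: ler_sum => i _.
rewrite normrM normrX ler_wpM2l // lerXn2r ?nnegrE //.
exact: le_trans hx (ler_norm _).
Qed.

Lemma sq_int_Ppoly_sum (M lam eta : R) (a : nat -> R) n :
  {ae mu, forall x, `|x| <= M} ->
  sq_int mu (fun y => \sum_(i < n) a i * (Ppoly lam eta i).[y]).
Proof.
move=> hM; rewrite (_ : (fun y => _)
                       = (fun y => (\sum_(i < n) a i *: Ppoly lam eta i).[y])).
  exact: sq_int_horner hM.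
by apply/funext => y; rewrite horner_sum; apply: eq_bigr => i _; rewrite hornerZ.
Qed.

End CompactSupport.

Section BoundedOperator.
Variables (R : realType) (mu : {measure set R -> \bar R}).
Variables (D : (R -> R) -> R -> R) (C : R).
Hypotheses (mu_fin : (mu setT < +oo)%E)
  (Dadd : forall f g, sq_int mu f -> sq_int mu g ->
     {ae mu, forall x, D (f \+ g) x = D f x + D g x})
  (Dscale : forall (a : R) f, sq_int mu f ->
     {ae mu, forall x, D (fun y => a * f y) x = a * D f x})
  (Dbounded : forall f, sq_int mu f -> sq_int mu (D f) /\
     (\int[mu]_x ((D f x) ^+ 2)%:E <= C%:E * \int[mu]_x ((f x) ^+ 2)%:E)%E).

Lemma D_sub (f s : R -> R) : sq_int mu f -> sq_int mu s ->
  {ae mu, forall x, D (f \- s) x = D f x - D s x}.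
Proof.
move=> sf ss; have -> : f \- s = f \+ (fun y => -1 * s y).
  by apply/funext => y /=; rewrite mulN1r.
move: (Dadd sf (sq_int_scale (-1) ss)) (Dscale (-1) ss).
by apply: filterS2 => x -> ->; rewrite mulN1r.
Qed.

Lemma integral_sqr_D_sub_le (f s : R -> R) (e : R) : sq_int mu f -> sq_int mu s ->
  {ae mu, forall x, `|f x - s x| <= e} ->
  (\int[mu]_x ((D f x - D s x) ^+ 2)%:E <= (`|C| * e ^+ 2)%:E * mu setT)%E.
Proof.
move=> sf ss fs.
have sfs : sq_int mu (f \- s).
  case: sf ss => mf _ [ms _]; apply: (sq_int_ae_bounded mu_fin (B := e)) => //.
  exact: measurable_funB.
have [[mD _] hD] := Dbounded sfs.
have [[mDf _] _] := Dbounded sf; have [[mDs _] _] := Dbounded ss.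
have -> : (\int[mu]_x ((D f x - D s x) ^+ 2)%:E
           = \int[mu]_x ((D (f \- s) x) ^+ 2)%:E)%E.
  apply: ae_eq_integral => //.
  - by apply: measurable_sqr_EFin; exact: measurable_funB.
  - exact: measurable_sqr_EFin.
  - by apply: filterS (D_sub sf ss) => x -> _.
apply: le_trans hD _; rewrite EFinM -muleA.
have i0 : (0 <= \int[mu]_x ((f \- s) x ^+ 2)%:E)%E.
  by apply: integral_ge0 => x _; rewrite lee_fin sqr_ge0.
have C_le : (C%:E <= `|C|%:E)%E by rewrite lee_fin ler_norm.
apply: le_trans (lee_wpmul2r i0 C_le) _.
by apply: lee_wpmul2l => //; apply: integral_sqr_le => //; case: sfs.
Qed.

Lemma D_eq_of_uniform_approx (f g : R -> R) : sq_int mu f -> measurable_fun setT g ->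
  (forall e, 0 < e -> exists s, [/\ sq_int mu s,
     {ae mu, forall x, `|f x - s x| <= e} & {ae mu, forall x, `|D s x - g x| <= e}]) ->
  {ae mu, forall x, D f x = g x}.
Proof.
move=> sf mg happrox.
have [[mDf _] _] := Dbounded sf.
have mh : measurable_fun setT (fun x => D f x - g x) by exact: measurable_funB.
suff : {ae mu, forall x, D f x - g x = 0}.
  by apply: filterS => x /eqP; rewrite subr_eq0 => /eqP.
(* (D f - g)^2 <= 2 (D f - D s)^2 + 2 e^2, and D f - D s is controlled by C e^2. *)
apply: (ae_eq0_of_integral_sqr_le (K := 2 * (`|C| + 1) * fine (mu setT))) => // e e0.
have [s [ss fs sg]] := happrox e e0.
have [[mDs _] _] := Dbounded ss.
under eq_integral => x _ do rewrite -[D f x](subrK (D s x)) -addrA.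
apply: le_trans (integral_sqr_addr_le _ _ sg) _.
- exact: measurable_funB.
- exact: measurable_funB.
have mu_fin_num : mu setT \is a fin_num by rewrite ge0_fin_numE.
have mu0 : 0 <= fine (mu setT) by rewrite fine_ge0.
apply: le_trans (leeD2r _ (lee_wpmul2l _ (integral_sqr_D_sub_le sf ss fs))) _ => //.
rewrite -(fineK mu_fin_num) -!EFinM -EFinD lee_fin.
have := normr_ge0 C; have := sqr_ge0 e; nra.
Qed.

End BoundedOperator.

Lemma creation_op_sum (R : realType) (lam eta : R) (mu : {measure set R -> \bar R})
    (D : (R -> R) -> R -> R) (M : R) (a : nat -> R) (n : nat) :
  (mu setT < +oo)%E -> {ae mu, forall x, `|x| <= M} -> creation_op lam eta mu D ->
  {ae mu, forall x, D (fun y => \sum_(i < n) a i * (Ppoly lam eta i).[y]) x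
                    = \sum_(i < n) a i * (Ppoly lam eta i.+1).[x]}.
Proof.
move=> mu_fin hM [Dadd Dscale _ DP].
have sqP k : sq_int mu (fun y => (Ppoly lam eta k).[y]) := sq_int_horner mu_fin _ hM.
elim: n => [|n IH].
  rewrite (_ : (fun y => \sum_(i < 0) a i * (Ppoly lam eta i).[y])
               = (fun y => 0 * (Ppoly lam eta 0).[y])); last first.
    by apply/funext => y; rewrite big_ord0 mul0r.
  by apply: filterS (Dscale 0 _ (sqP 0)) => x ->; rewrite big_ord0 mul0r.
rewrite (_ : (fun y => \sum_(i < n.+1) a i * (Ppoly lam eta i).[y])
             = (fun y => \sum_(i < n) a i * (Ppoly lam eta i).[y])
               \+ (fun y => a n * (Ppoly lam eta n).[y])); last first.
  by apply/funext => y; rewrite big_ord_recr.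
have h1 := Dadd _ _ (sq_int_Ppoly_sum mu_fin lam eta a n hM) (sq_int_scale (a n) (sqP n)).
have h2 := Dscale (a n) _ (sqP n).
apply: (filter_app _ _ (DP n)); move: h1 h2 IH; apply: filterS3 => x -> -> -> ->.
by rewrite big_ord_recr.
Qed.

Lemma exists_geometric_le (R : realType) (c r e : R) : `|r| < 1 -> 0 < e ->
  exists n, c * r ^+ n <= e.
Proof.
move=> r1 e0; have ce0 : 0 < e / (`|c| + 1) by rewrite divr_gt0 // ltr_pwDr.
have /cvgrPdist_le /(_ _ ce0) [N _ hN] := cvg_expr r1.
exists N; have := hN N (leqnn N); rewrite /= sub0r normrN normrX => rN.
apply: le_trans (ler_norm _) _; rewrite normrM normrX.
apply: le_trans (ler_wpM2l (normr_ge0 c) rN) _.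
rewrite mulrA ler_pdivrMr ?ltr_pwDr //.
have := normr_ge0 c; nra.
Qed.

Lemma continuous_at0_small (R : realType) (f : R -> R) (c : R) :
  f 0 = 0 -> {for 0, continuous f} -> 0 < c ->
  exists2 e : R, 0 < e & forall z, `|z| < e -> `|f z| <= c.
Proof.
move=> f0 fcont c_gt0.
have : f x @[x --> 0] --> 0 by move: fcont; rewrite /prop_for /continuous_at f0.
move=> /cvgr_dist_le /(_ c c_gt0) /nbhs_ballP [e e_gt0 f_near].
exists e => // z hz; have := f_near z; rewrite /ball /= !sub0r !normrN.
exact.
Qed.

Lemma creation_op_resolvent (R : realType) (lam eta : R) (mu : {measure set R -> \bar R})
    (D : (R -> R) -> R -> R) (m w : R) :
  0 <= eta -> 0 <= m -> (mu setT < +oo)%E -> {ae mu, forall x, `|x| <= m} ->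
  creation_op lam eta mu D -> (m + `|lam| + eta + 1) * `|w| <= 1/4 ->
  {ae mu, forall x, D (fun y => (1 - y * (w / Psi_den lam eta w))^-1) x
     = (x - w) / gf_num lam eta w * (1 - x * (w / Psi_den lam eta w))^-1}.
Proof.
move=> eta_ge0 m0 mu_fin hm hD; set A := m + `|lam| + eta + 1 => hw.
have hA : m + `|lam| + eta + 1 <= A by [].
have A1 : 1 <= A by rewrite /A; have := normr_ge0 lam; lra.
have [->|w0] := eqVneq w 0.
  rewrite (_ : (fun y => (1 - y * (0 / Psi_den lam eta 0))^-1)
               = (fun y => (Ppoly lam eta 0).[y])); last first.
    by apply/funext => y; rewrite horner_Ppoly0 mul0r mulr0 subr0 invr1.
  case: hD => _ _ _ DP; apply: filterS (DP 0) => x ->.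
  by rewrite horner_Ppoly1 /gf_num expr0n /= !(mul0r, mulr0, subr0, addr0, invr1, divr1).
case: (hD) => Dadd Dscale [C Dbounded] _.
apply: (D_eq_of_uniform_approx mu_fin Dadd Dscale Dbounded).
- apply: (sq_int_ae_bounded mu_fin (B := 2)); first exact: measurable_resolvent.
  by apply: filterS hm => x hx; exact (norm_resolvent_le eta_ge0 hA hw hx).
- apply: measurable_funM; last exact: measurable_resolvent.
  by apply: measurable_funM; [apply: measurable_funB | exact: measurable_cst].
move=> e e0.
have rho0 : 0 <= A * `|w| by rewrite mulr_ge0 //; lra.
have [n hn] : exists n, 6 * A * (A * `|w|) ^+ n <= e.
  by apply: exists_geometric_le => //; rewrite ger0_norm //; lra.
have tail : 6 * A * (A * `|w|) ^+ n.+1 <= e.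
  apply: le_trans hn; apply: ler_wpM2l; first by rewrite mulr_ge0 //; lra.
  by rewrite exprS ler_piMl ?exprn_ge0 //; lra.
pose c i := Psi_den lam eta w / gf_num lam eta w * w ^+ i.
exists (fun y => \sum_(i < n.+1) c i * (Ppoly lam eta i).[y]); split.
- exact (sq_int_Ppoly_sum mu_fin lam eta c n.+1 hm).
- apply: filterS hm => x hx.
  have := resolvent_partial_sum_le eta_ge0 hA hw n hx; move/le_trans; apply.
  apply: le_trans tail; rewrite ler_wpM2r ?exprn_ge0 //; lra.
- apply: filterS2 hm (creation_op_sum c n.+1 mu_fin hm hD) => x hx ->.
  rewrite distrC; have := shifted_partial_sum_le eta_ge0 hA hw n hx w0.
  by move/le_trans; apply.
Qed.

Section ClosedForm.
Variables (R : rcfType) (lam eta z w : R).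
Hypothesis Psi_root : z * Psi_den lam eta w = w.

Lemma sqrt_discr_Psi : 0 <= 1 - lam * z - 2 * z * (eta + 1) * w ->
  Num.sqrt ((1 - lam * z) ^+ 2 - 4 * z ^+ 2 * (eta + 1))
  = 1 - lam * z - 2 * z * (eta + 1) * w.
Proof.
move=> t0; rewrite -[RHS]ger0_norm // -sqrtr_sqr; congr Num.sqrt.
apply/eqP; rewrite -subr_eq0 -oppr_eq0 opprB.
have -> : (1 - lam * z - 2 * z * (eta + 1) * w) ^+ 2
          - ((1 - lam * z) ^+ 2 - 4 * z ^+ 2 * (eta + 1))
          = 4 * z * (eta + 1) * (z * Psi_den lam eta w - w) by rewrite /Psi_den; ring.
by rewrite Psi_root subrr mulr0.
Qed.

Lemma Psi_inverse_closed_form (x : R) : 0 <= eta -> z != 0 ->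
  0 <= 1 - lam * z - 2 * z * (eta + 1) * w -> 1 - z * w != 0 ->
  (x - w) / gf_num lam eta w =
  x * (4 * z ^+ 2 * (eta + 1) ^+ 2
       / ((2 * eta + 1 + lam * z + Num.sqrt ((1 - lam * z) ^+ 2 - 4 * z ^+ 2 * (eta + 1)))
          * (1 - lam * z - Num.sqrt ((1 - lam * z) ^+ 2 - 4 * z ^+ 2 * (eta + 1)))))
  - 2 * z * (eta + 1)
    / (2 * eta + 1 + lam * z + Num.sqrt ((1 - lam * z) ^+ 2 - 4 * z ^+ 2 * (eta + 1))).
Proof.
move=> eta_ge0 z0 t0 zw1; rewrite sqrt_discr_Psi //.
have w0 : w != 0.
  apply: contra_neq z0 => w0; move: Psi_root.
  by rewrite w0 /Psi_den expr2 !mulr0 !addr0 mulr1.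
have u_eq : gf_num lam eta w = w * (1 - z * w) / z.
  apply: (mulIf z0); rewrite mulfVK //.
  have -> : gf_num lam eta w * z = z * Psi_den lam eta w - z * w ^+ 2.
    by rewrite /gf_num /Psi_den; ring.
  by rewrite Psi_root; ring.
have e2 : 2 * eta + 1 + lam * z + (1 - lam * z - 2 * z * (eta + 1) * w)
          = 2 * (eta + 1) * (1 - z * w) by ring.
have e3 : 1 - lam * z - (1 - lam * z - 2 * z * (eta + 1) * w)
          = 2 * z * (eta + 1) * w by ring.
have eta1 : eta + 1 != 0 by rewrite gt_eqF // ltr_pwDr.
by rewrite u_eq e2 e3; field; rewrite zw1 eta1 w0 z0.
Qed.

End ClosedForm.

Lemma small_Psi_root_conditions (R : realFieldType) (lam eta m A z w : R) :
  0 <= eta -> 0 <= m -> m + `|lam| + eta + 1 <= A -> A * `|w| <= 1/4 ->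
  z * Psi_den lam eta w = w ->
  0 <= 1 - lam * z - 2 * z * (eta + 1) * w /\ 1 - z * w != 0.
Proof.
move=> eta_ge0 m0 hA hw Psi_root.
have x0 : `|0 : R| <= m by rewrite normr0.
have [_ /andP[Q34 _] _] := gf_den_bounds eta_ge0 hA x0 hw.
have w0 := normr_ge0 w; have z0 := normr_ge0 z.
have hz : `|z| <= 4/3 * `|w|.
  have : `|z| * Psi_den lam eta w = `|w|.
    by rewrite -[in RHS]Psi_root normrM [`|Psi_den _ _ _|]ger0_norm //; lra.
  nra.
have hL : `|lam| * `|w| + (eta + 1) * `|w| <= 1/4.
  have : (m + `|lam| + eta + 1) * `|w| <= A * `|w| by rewrite ler_wpM2r.
  nra.
have w1 : `|w| <= 1/4.
  have : 0 <= `|lam| * `|w| by rewrite mulr_ge0.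
  have : 0 <= eta * `|w| by rewrite mulr_ge0.
  lra.
have hzw : `|z * w| <= 4/3 * `|w| * `|w| by rewrite normrM ler_wpM2r.
have b1 : lam * z <= `|lam| * (4/3 * `|w|).
  by apply: le_trans (ler_norm _) _; rewrite normrM ler_wpM2l.
have b2 : (eta + 1) * (z * w) <= (eta + 1) * (4/3 * `|w| * `|w|).
  by apply: ler_wpM2l; [lra | exact: le_trans (ler_norm _) hzw].
have zw : z * w <= 4/3 * `|w| * `|w| by exact: le_trans (ler_norm _) hzw.
have hw2 : (eta + 1) * `|w| * `|w| <= (eta + 1) * `|w| * (1/4).
  by rewrite ler_wpM2l // mulr_ge0 //; lra.
split; first nra.
by rewrite gt_eqF // subr_gt0; nra.
Qed.

Theorem mainTheorem4 (R : realType) (lam eta : R) (heta : 0 <= eta)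
    (mu : {measure set R -> \bar R}) (hmu : orth_measure lam eta mu)
    (D : (R -> R) -> (R -> R)) (hD : creation_op lam eta mu D)
    (Winv : R -> R) (hW : local_inverse_Psi lam eta Winv) :
  exists eps : R, 0 < eps /\
    forall z : R, `|z| < eps ->
      {ae mu, forall x,
         D (fun y => (1 - y * z)^-1) x
         = ((x - Winv z) / (1 + lam * Winv z + eta * (Winv z) ^+ 2))
           * (1 - x * z)^-1}
      /\ (z != 0 ->
          {ae mu, forall x,
             D (fun y => (1 - y * z)^-1) x
             = (x * (4 * z ^+ 2 * (eta + 1) ^+ 2
                     / ((2 * eta + 1 + lam * z
                         + Num.sqrt ((1 - lam * z) ^+ 2 - 4 * z ^+ 2 * (eta + 1)))
                        * (1 - lam * z
                           - Num.sqrt ((1 - lam * z) ^+ 2 - 4 * z ^+ 2 * (eta + 1)))))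
                - 2 * z * (eta + 1)
                  / (2 * eta + 1 + lam * z
                     + Num.sqrt ((1 - lam * z) ^+ 2 - 4 * z ^+ 2 * (eta + 1))))
               * (1 - x * z)^-1}).
Proof.
case: hmu => mu_fin [M hM] _ _; case: hW => W0 Wcont [d [d_gt0 Psi_W]].
set m := `|M|; have m0 : 0 <= m := normr_ge0 M.
have hm : {ae mu, forall x, `|x| <= m}.
  by apply: filterS (ae_norm_le_of_null hM) => x /le_trans; apply; exact: ler_norm.
set A := m + `|lam| + eta + 1; have hA : m + `|lam| + eta + 1 <= A by [].
have A_gt0 : 0 < A by rewrite /A; have := normr_ge0 lam; lra.
have c_gt0 : 0 < 1/4 / A by rewrite divr_gt0.
have [e e_gt0 W_small] := continuous_at0_small W0 Wcont c_gt0.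
exists (Num.min e d); split; first by rewrite lt_min e_gt0 d_gt0.
move=> z; rewrite lt_min => /andP[/W_small + /Psi_W].
set w := Winv z; rewrite ler_pdivlMr // mulrC => hw.
rewrite /Psi -/(Psi_den lam eta w) => Psi_w.
have res := creation_op_resolvent heta m0 mu_fin hm hD hw.
rewrite Psi_w in res; split => // z0.
apply: filterS res => x ->; congr (_ * _).
have Psi_root : z * Psi_den lam eta w = w.
  have x0 : `|0 : R| <= m by rewrite normr0.
  have [_ /andP[Q34 _] _] := gf_den_bounds heta hA x0 hw.
  by rewrite -Psi_w mulfVK // gt_eqF //; lra.
have [t_ge0 zw_neq1] := small_Psi_root_conditions heta m0 hA hw Psi_root.
exact: Psi_inverse_closed_form.
Qed.
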